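(* Let $\sigma,\eta>0$ and $\mathscr{C}$ be a family of balls as in the context. Let $B,B'\in\mathscr{C}$ with $B'\not\subset B^{(3)}$. Then \[ (1-\beta)|x_B-x_{B'}|\le|x-y|\le 2|x_B-x_{B'}|\quad\text{for all }x\in B,\ y\in B', \] where $\beta:=(1+2/\eta^2)^{-1/2}\in(0,1)$.
   Context: Cover: for constants $\sigma,\eta>0$, $\mathscr{C}$ is a family of closed balls in $\mathbb{R}^3$ with $\bigcup_{B\in\mathscr{C}}B=\mathbb{R}^3$ and $|B|\geq 4\pi/3$ for all $B\in\mathscr{C}$, such that (i) each ball in $\mathscr{C}$ intersects at most $\sigma$ balls in $\mathscr{C}$, and (ii) if $B,B'\in\mathscr{C}$ intersect then $\eta^{-1}\le |B|^{1/3}/|B'|^{1/3}\le\eta$. $x_B$ denotes the center of $B$. Layers: for $B\in\mathscr{C}$ set $B^{(0)}:=B$, $P^{(0)}:=\{B\}$, and for $n\ge1$, $P^{(n)}:=\{B'\in\mathscr{C}: B'\cap B^{(n-1)}\neq\emptyset\}$, $B^{(n)}:=\bigcup_{B'\in P^{(n)}}B'$. *)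

From HB Require Import structures.
From mathcomp Require Import all_boot all_order all_algebra.
From mathcomp Require Import all_classical all_reals all_analysis.
Set Implicit Arguments. Unset Strict Implicit. Unset Printing Implicit Defensive.
Import Order.TTheory GRing.Theory Num.Theory.
Local Open Scope ring_scope.
Local Open Scope classical_set_scope.

Section Balls.
Variable R : realType.

Definition enorm (x : 'rV[R]_3) : R := Num.sqrt (\sum_(i < 3) x ord0 i ^+ 2).

Definition ball3 := ('rV[R]_3 * R)%type.
Definition bcenter (B : ball3) : 'rV[R]_3 := fst B.
Definition bradius (B : ball3) : R := B.2.

Definition cball (B : ball3) : set 'rV[R]_3 :=
  [set x | enorm (x - bcenter B) <= bradius B].

Definition bvol (B : ball3) : R := 4 / 3 * pi * bradius B ^+ 3.

Definition intersect (B B' : ball3) : Prop := cball B `&` cball B' !=set0.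

Definition is_cover (sigma eta : R) (C : set ball3) : Prop :=
  [/\ (forall B, C B -> 0 < bradius B),
      (forall x : 'rV[R]_3, exists2 B, C B & cball B x),
      (forall B, C B -> 4 / 3 * pi <= bvol B),
      (forall B, C B -> forall s : seq ball3, uniq s ->
          (forall B', B' \in s -> C B' /\ intersect B B') ->
          (size s)%:R <= sigma) &
      (forall B B', C B -> C B' -> intersect B B' ->
          eta^-1 <= powR (bvol B) (1/3) / powR (bvol B') (1/3) <= eta)].

Fixpoint layer (C : set ball3) (B : ball3) (n : nat) : set 'rV[R]_3 :=
  match n with
  | 0 => cball B
  | n'.+1 => \bigcup_(B' in [set B' | C B' /\ cball B' `&` layer C B n' !=set0])
               cball B'
  end.

Definition beta (eta : R) : R := powR (1 + 2 / eta ^+ 2) (- (1/2)).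

End Balls.

(* If [B'] is not contained in [B^(3)], no two balls of the cover link [B] to [B'].
   Walk along the segment from [x_B] to [x_B'] and stop where it leaves the union of the
   balls meeting [B]; by local finiteness of the cover (near any point, balls whose
   centres lie in a common octant pairwise intersect, so by (i) there are at most
   [8 sigma] of them) some ball [O] of the cover takes over there.  [O] meets neither [B]
   (it is not in the union) nor [B'] (that would give a chain [B, A, O, B']), and its
   radius is at least [r/eta^2], [r] the larger radius of [B] and [B'].  Stewart's theorem
   for the centre of [O] then gives
   [|x_B - x_B'|^2 > (1 + 2/eta^2) (r_B + r_B')^2], i.e. [r_B + r_B' < beta |x_B - x_B'|],
   and both bounds follow from the triangle inequality. *)

From mathcomp Require Import all_boot all_order all_algebra.
From mathcomp Require Import all_classical all_reals all_analysis.
From mathcomp Require Import ring lra.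
Import Order.TTheory GRing.Theory Num.Theory.
Local Open Scope ring_scope.
Local Open Scope classical_set_scope.
Set Implicit Arguments. Unset Strict Implicit. Unset Printing Implicit Defensive.

Lemma size_sum_count (T : Type) (I : finType) (f : T -> I) (s : seq T) :
  size s = (\sum_(k : I) count (fun x => f x == k) s)%N.
Proof.
elim: s => [|x s IHs] /=; first by rewrite big1.
rewrite big_split /= -IHs (bigD1 (f x)) //= eqxx big1 // => k.
by rewrite eq_sym => /negbTE ->.
Qed.

Lemma uniq_size_bounded_enum (T : eqType) (P : T -> Prop) (N : nat) :
  (forall s : seq T, uniq s -> (forall x, x \in s -> P x) -> (size s <= N)%N) ->
  exists s : seq T, forall x, P x -> x \in s.
Proof.
move=> size_le.
pose admissible n := `[< exists s : seq T, [/\ uniq s, forall x, x \in s -> P x & size s = n] >].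
have adm0 : exists n, admissible n by exists 0%N; apply/asboolP; exists [::].
have adm_le n : admissible n -> (n <= N)%N.
  by move=> /asboolP[s [s_uniq sP <-]]; apply: size_le.
case: (ex_maxnP adm0 adm_le) => _ /asboolP[s [s_uniq sP <-]] size_max.
exists s => x Px; apply/negPn/negP => x_notin.
have /size_max : admissible (size (x :: s)).
  apply/asboolP; exists (x :: s); split => //=; first by rewrite x_notin.
  by move=> y; rewrite inE => /predU1P[->|/sP].
by rewrite ltnn.
Qed.

Section Euclid.
Variable R : realType.
Implicit Types (u v w : 'rV[R]_3) (t : R).

Definition i0 : 'I_3 := @Ordinal 3 0 isT.
Definition i1 : 'I_3 := @Ordinal 3 1 isT.
Definition i2 : 'I_3 := @Ordinal 3 2 isT.

Definition sqnorm v : R := v ord0 i0 ^+ 2 + v ord0 i1 ^+ 2 + v ord0 i2 ^+ 2.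

Lemma big_ord3 (F : 'I_3 -> R) : \sum_(i < 3) F i = F i0 + F i1 + F i2.
Proof.
rewrite !big_ord_recl big_ord0 addr0 addrA.
by congr (F _ + F _ + F _); apply/val_inj.
Qed.

Lemma enormE v : enorm v = Num.sqrt (sqnorm v).
Proof. by rewrite /enorm big_ord3. Qed.

Lemma sqnorm_ge0 v : 0 <= sqnorm v.
Proof. by rewrite /sqnorm !addr_ge0 ?sqr_ge0. Qed.

Lemma enorm_ge0 v : 0 <= enorm v.
Proof. by rewrite enormE sqrtr_ge0. Qed.

Lemma sqr_enorm v : enorm v ^+ 2 = sqnorm v.
Proof. by rewrite enormE sqr_sqrtr // sqnorm_ge0. Qed.

Lemma enorm_le t v : 0 <= t -> (enorm v <= t) = (sqnorm v <= t ^+ 2).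
Proof. by move=> t0; rewrite -sqr_enorm ler_pXn2r ?nnegrE ?enorm_ge0. Qed.

Lemma enorm_gt t v : 0 <= t -> (t < enorm v) = (t ^+ 2 < sqnorm v).
Proof. by move=> t0; rewrite !ltNge enorm_le. Qed.

Lemma enormN v : enorm (- v) = enorm v.
Proof. by rewrite !enormE /sqnorm !mxE !sqrrN. Qed.

Lemma enorm_distC u v : enorm (u - v) = enorm (v - u).
Proof. by rewrite -enormN opprB. Qed.

Lemma enormZ t v : enorm (t *: v) = `|t| * enorm v.
Proof.
rewrite !enormE /sqnorm !mxE -sqrtr_sqr -sqrtrM ?sqr_ge0 //.
by congr Num.sqrt; rewrite !exprMn; ring.
Qed.

Lemma enorm0 : enorm (0 : 'rV[R]_3) = 0.
Proof. by rewrite -(scale0r 0) enormZ normr0 mul0r. Qed.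

Lemma enormD u v : enorm (u + v) <= enorm u + enorm v.
Proof.
rewrite enorm_le ?addr_ge0 ?enorm_ge0 // sqrrD !sqr_enorm.
set a0 := u ord0 i0; set a1 := u ord0 i1; set a2 := u ord0 i2.
set b0 := v ord0 i0; set b1 := v ord0 i1; set b2 := v ord0 i2.
have -> : sqnorm (u + v) = sqnorm u + sqnorm v + 2 * (a0 * b0 + a1 * b1 + a2 * b2).
  by rewrite /sqnorm !mxE -/a0 -/a1 -/a2 -/b0 -/b1 -/b2; ring.
suff cauchy_schwarz : a0 * b0 + a1 * b1 + a2 * b2 <= enorm u * enorm v.
  by rewrite -mulr_natl; lra.
have [dot_le0|dot_gt0] := lerP (a0 * b0 + a1 * b1 + a2 * b2) 0.
  by rewrite (le_trans dot_le0) ?mulr_ge0 ?enorm_ge0.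
rewrite !enormE -sqrtrM ?sqnorm_ge0 // -(ger0_norm (ltW dot_gt0)) -sqrtr_sqr.
rewrite ler_sqrt ?mulr_ge0 ?sqnorm_ge0 // -subr_ge0.
(* Lagrange's identity *)
have -> : sqnorm u * sqnorm v - (a0 * b0 + a1 * b1 + a2 * b2) ^+ 2 =
  (a0 * b1 - a1 * b0) ^+ 2 + (a0 * b2 - a2 * b0) ^+ 2 + (a1 * b2 - a2 * b1) ^+ 2.
  by rewrite /sqnorm -/a0 -/a1 -/a2 -/b0 -/b1 -/b2; ring.
by rewrite !addr_ge0 ?sqr_ge0.
Qed.

Lemma enorm_distD u v w : enorm (u - w) <= enorm (u - v) + enorm (v - w).
Proof. by have := enormD (u - v) (v - w); rewrite addrA subrK. Qed.

Lemma sqnorm_distD_same_sign u v w :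
  (forall i, (0 <= u ord0 i - w ord0 i) = (0 <= v ord0 i - w ord0 i)) ->
  sqnorm (u - v) <= sqnorm (u - w) + sqnorm (v - w).
Proof.
move=> same_sign.
have coord_le (i : 'I_3) : (u ord0 i - v ord0 i) ^+ 2 <=
    (u ord0 i - w ord0 i) ^+ 2 + (v ord0 i - w ord0 i) ^+ 2.
  have ab_ge0 : 0 <= (u ord0 i - w ord0 i) * (v ord0 i - w ord0 i).
    have := same_sign i.
    case: (lerP 0 (u ord0 i - w ord0 i)) => ha; case: lerP => hb // _.
    - exact: mulr_ge0.
    - by rewrite nmulr_rge0 ?ltW.
  nra.
by rewrite /sqnorm !mxE; have := coord_le i0; have := coord_le i1; have := coord_le i2; lra.
Qed.

Definition segpt u v t := u + t *: (v - u).

Lemma segpt0 u v : segpt u v 0 = u.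
Proof. by rewrite /segpt scale0r addr0. Qed.

Lemma segpt1 u v : segpt u v 1 = v.
Proof. by rewrite /segpt scale1r addrC subrK. Qed.

Lemma enorm_segpt_dist u v s t :
  enorm (segpt u v s - segpt u v t) = `|s - t| * enorm (v - u).
Proof.
have -> : segpt u v s - segpt u v t = (s - t) *: (v - u).
  by apply/rowP => i; rewrite !mxE; ring.
by rewrite enormZ.
Qed.

Lemma stewart_identity u v w t :
  (1 - t) * sqnorm (w - u) + t * sqnorm (w - v) =
  sqnorm (w - segpt u v t) + t * (1 - t) * sqnorm (u - v).
Proof. by rewrite /sqnorm !mxE; ring. Qed.


End Euclid.

(* [a2], [b2], [z2] are the squared distances from the centre of a ball of radius [rho]
   to two points, and to the point at parameter [t] between them; [d2] is the squared
   distance between the two points. *)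
Lemma stewart_gap (R : realFieldType) (t rho r r' e d2 a2 b2 z2 : R) :
  0 <= t <= 1 -> 0 < r' <= r -> 0 <= e -> e * r <= rho ->
  z2 <= rho ^+ 2 -> (rho + r) ^+ 2 < a2 -> (rho + r') ^+ 2 < b2 ->
  (1 - t) * a2 + t * b2 = z2 + t * (1 - t) * d2 ->
  (1 + 2 * e) * (r + r') ^+ 2 < d2.
Proof.
move=> /andP[t_ge0 t_le1] /andP[r'_gt0 r'_le] e_ge0 er_le z2_le a2_gt b2_gt stewart.
have strict_mean : (1 - t) * (rho + r) ^+ 2 + t * (rho + r') ^+ 2 < (1 - t) * a2 + t * b2.
  have [t_lt1|t_ge1] := ltrP t 1; first by nra.
  have -> : t = 1 by apply/eqP; rewrite eq_le t_le1 t_ge1.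
  lra.
have excess : (1 - t) * (r ^+ 2 + 2 * rho * r) + t * (r' ^+ 2 + 2 * rho * r') <
    t * (1 - t) * d2.
  have -> : (1 - t) * (r ^+ 2 + 2 * rho * r) + t * (r' ^+ 2 + 2 * rho * r') =
      (1 - t) * (rho + r) ^+ 2 + t * (rho + r') ^+ 2 - rho ^+ 2 by ring.
  lra.
have r_gt0 : 0 < r := lt_le_trans r'_gt0 r'_le.
have rho_r : e * r ^+ 2 <= rho * r by rewrite expr2 mulrA ler_pM2r.
have rho_r' : e * r' ^+ 2 <= rho * r'.
  by rewrite expr2 mulrA ler_pM2r // (le_trans _ er_le) // ler_wpM2l.
have weighted : (1 + 2 * e) * ((1 - t) * r ^+ 2 + t * r' ^+ 2) <=
    (1 - t) * (r ^+ 2 + 2 * rho * r) + t * (r' ^+ 2 + 2 * rho * r') by nra.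
have convex : t * (1 - t) * (r + r') ^+ 2 <= (1 - t) * r ^+ 2 + t * r' ^+ 2.
  suff -> : (1 - t) * r ^+ 2 + t * r' ^+ 2 =
      t * (1 - t) * (r + r') ^+ 2 + ((1 - t) * r - t * r') ^+ 2 by rewrite lerDl sqr_ge0.
  by ring.
have scaled : t * (1 - t) * ((1 + 2 * e) * (r + r') ^+ 2) < t * (1 - t) * d2.
  rewrite mulrCA; apply: le_lt_trans (ler_wpM2l _ convex) _; lra.
have t_mean_ge0 : 0 <= t * (1 - t) by rewrite mulr_ge0 ?subr_ge0.
by rewrite ltNge; apply/negP => d2_le; move: scaled; rewrite ltNge ler_wpM2l.
Qed.

Section BallGeometry.
Variable R : realType.
Implicit Types (A B O X Y : ball3 R).

Lemma intersect_sym A B : intersect A B -> intersect B A.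
Proof. by case=> x [xA xB]; exists x. Qed.

Lemma cball_center B : 0 <= bradius B -> cball B (bcenter B).
Proof. by rewrite /cball /= subrr enorm0. Qed.

Lemma intersect_center_dist A B : 0 <= bradius A -> 0 <= bradius B ->
  0 < bradius A + bradius B ->
  enorm (bcenter A - bcenter B) <= bradius A + bradius B -> intersect A B.
Proof.
move=> rA_ge0 rB_ge0 r_gt0 dist_le.
have dist_le_r (rho : R) : 0 <= rho ->
    enorm ((rho / (bradius A + bradius B)) *: (bcenter A - bcenter B)) <= rho.
  move=> rho_ge0; rewrite enormZ ger0_norm ?divr_ge0 ?(ltW r_gt0) // mulrAC.
  by rewrite ler_pdivrMr // ler_wpM2l.
exists (segpt (bcenter A) (bcenter B) (bradius A / (bradius A + bradius B))); split.
- by rewrite /cball /= /segpt addrAC subrr add0r -opprB scalerN enormN dist_le_r.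
- rewrite /cball /=.
  have -> : segpt (bcenter A) (bcenter B) (bradius A / (bradius A + bradius B)) - bcenter B
      = (bradius B / (bradius A + bradius B)) *: (bcenter A - bcenter B).
    by apply/rowP => i; rewrite !mxE; field; rewrite lt0r_neq0.
  exact: dist_le_r.
Qed.

Lemma center_dist_gt_of_disjoint A B : 0 <= bradius A -> 0 < bradius B ->
  ~ intersect A B -> bradius A + bradius B < enorm (bcenter A - bcenter B).
Proof.
move=> rA_ge0 rB_gt0 disjoint; rewrite ltNge; apply/negP => dist_le; apply: disjoint.
by apply: intersect_center_dist; rewrite ?(ltW rB_gt0) ?ltr_wpDl.
Qed.

Lemma center_dist_gt_of_crossing_ball X Y O t e :
  0 <= t <= 1 -> 0 < bradius Y <= bradius X -> 0 <= e -> e * bradius X <= bradius O ->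
  cball O (segpt (bcenter X) (bcenter Y) t) -> ~ intersect O X -> ~ intersect O Y ->
  (1 + 2 * e) * (bradius X + bradius Y) ^+ 2 < enorm (bcenter X - bcenter Y) ^+ 2.
Proof.
move=> t01 /andP[rY_gt0 rY_le] e_ge0 er_le crossing OX OY.
have rO_ge0 : 0 <= bradius O.
  by rewrite (le_trans _ er_le) // mulr_ge0 // (le_trans _ rY_le) ?ltW.
have rX_gt0 := lt_le_trans rY_gt0 rY_le.
have dX := center_dist_gt_of_disjoint rO_ge0 rX_gt0 OX.
have dY := center_dist_gt_of_disjoint rO_ge0 rY_gt0 OY.
rewrite sqr_enorm; apply: (stewart_gap t01 _ e_ge0 er_le _ _ _ (stewart_identity _ _ (bcenter O) t)).
- by rewrite rY_gt0 rY_le.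
- by rewrite -enorm_le // enorm_distC.
- by rewrite -enorm_gt // (addr_ge0 rO_ge0 (ltW _)).
- by rewrite -enorm_gt // (addr_ge0 rO_ge0 (ltW _)).
Qed.

Definition near_ball (q : 'rV[R]_3) (d : R) O := enorm (q - bcenter O) < bradius O + d.

Definition octant (q : 'rV[R]_3) O : {ffun 'I_3 -> bool} :=
  [ffun i => 0 <= bcenter O ord0 i - q ord0 i].

Lemma near_octant_intersect q O1 O2 :
  1 <= bradius O1 -> 1 <= bradius O2 -> near_ball q (1/4) O1 -> near_ball q (1/4) O2 ->
  octant q O1 = octant q O2 -> intersect O1 O2.
Proof.
move=> r1_ge1 r2_ge1 near1 near2 same_octant.
have r1_ge0 : 0 <= bradius O1 by rewrite (le_trans ler01).
have r2_ge0 : 0 <= bradius O2 by rewrite (le_trans ler01).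
apply: intersect_center_dist; rewrite ?ltr_wpDr ?(lt_le_trans ltr01) //.
rewrite enorm_le ?addr_ge0 //.
apply: le_trans (sqnorm_distD_same_sign (w := q) _) _.
  by move=> i; have := congr1 (fun f : {ffun _ -> _} => f i) same_octant; rewrite !ffunE.
rewrite -!sqr_enorm.
(* radii are at least 1, hence (r1 + 1/4)^2 + (r2 + 1/4)^2 <= (r1 + r2)^2 *)
have [d1_ge0 d2_ge0] := (enorm_ge0 (bcenter O1 - q), enorm_ge0 (bcenter O2 - q)).
rewrite /near_ball !(enorm_distC q) in near1 near2; nra.
Qed.

Lemma near_ballW q d d' O : d <= d' -> near_ball q d O -> near_ball q d' O.
Proof. by move=> le_dd' /lt_le_trans; apply; rewrite lerD2l. Qed.

Lemma finite_balls_gap q (s : seq (ball3 R)) d : 0 < d ->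
  exists2 e, 0 < e <= d & forall O, O \in s -> near_ball q e O -> cball O q.
Proof.
move=> d_gt0; elim: s => [|O0 s [e /andP[e_gt0 e_le] gap]].
  by exists d => //; rewrite d_gt0 lexx.
have [q_in_O0|q_notin_O0] := pselect (cball O0 q).
  by exists e; rewrite ?e_gt0 // => O; rewrite inE => /predU1P[->|/gap].
set g := enorm (q - bcenter O0) - bradius O0.
have g_gt0 : 0 < g by rewrite subr_gt0 ltNge; apply/negP.
have [min_le_e min_le_g] : Order.min e g <= e /\ Order.min e g <= g.
  by rewrite !ge_min !lexx orbT.
exists (Order.min e g); first by rewrite lt_min e_gt0 g_gt0 (le_trans min_le_e).
move=> O; rewrite inE => /predU1P[->|/gap + /(near_ballW min_le_e)]; last by apply.
rewrite /near_ball => /lt_le_trans/(_ (lerD (lexx _) min_le_g)).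
by rewrite /g subrKC ltxx.
Qed.

Lemma enorm_dist_bounds X Y x y k :
  k <= 1 -> bradius X + bradius Y <= k * enorm (bcenter X - bcenter Y) ->
  cball X x -> cball Y y ->
  (1 - k) * enorm (bcenter X - bcenter Y) <= enorm (x - y) /\
  enorm (x - y) <= 2 * enorm (bcenter X - bcenter Y).
Proof.
rewrite /cball /= => k_le1 radii_le Xx Yy.
have D_ge0 := enorm_ge0 (bcenter X - bcenter Y).
have kD_le : k * enorm (bcenter X - bcenter Y) <= enorm (bcenter X - bcenter Y).
  by rewrite ler_piMl.
have := enorm_distD x (bcenter X) y; have := enorm_distD (bcenter X) (bcenter Y) y.
have := enorm_distD (bcenter X) x (bcenter Y); have := enorm_distD x y (bcenter Y).
rewrite (enorm_distC (bcenter X) x) (enorm_distC (bcenter Y) y); split; lra.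
Qed.

End BallGeometry.

Lemma powR_bvol (R : realType) (B : ball3 R) : 0 <= bradius B ->
  powR (bvol B) (1/3) = powR (4 / 3 * pi) (1/3) * bradius B.
Proof.
move=> rB_ge0; rewrite /bvol powRM ?mulr_ge0 ?exprn_ge0 ?pi_ge0 //; congr (_ * _).
by rewrite -(powR_mulrn 3 rB_ge0) -powRrM mul1r mulfV ?powRr1 ?pnatr_eq0.
Qed.

Lemma betaE (R : realType) (eta : R) : beta eta = (Num.sqrt (1 + 2 / eta ^+ 2))^-1.
Proof.
by rewrite /beta powRN div1r powR12_sqrt // addr_ge0 // divr_ge0 // sqr_ge0.
Qed.

Lemma beta_gt0_lt1 (R : realType) (eta : R) : 0 < eta -> 0 < beta eta < 1.
Proof.
move=> eta_gt0.
have u_gt1 : 1 < 1 + 2 / eta ^+ 2 by rewrite ltrDl divr_gt0 // exprn_gt0.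
have sqrt_u_gt1 : 1 < Num.sqrt (1 + 2 / eta ^+ 2).
  by rewrite -[X in X < _]sqrtr1 ltr_sqrt // (lt_trans ltr01).
by rewrite betaE invr_gt0 invf_lt1 ?(lt_trans ltr01 sqrt_u_gt1).
Qed.

Section Cover.
Variable R : realType.
Variables (sigma eta : R) (C : set (ball3 R)).
Hypothesis sigma_gt0 : 0 < sigma.
Hypothesis eta_gt0 : 0 < eta.
Hypothesis cover : is_cover sigma eta C.
Implicit Types (A B O X Y : ball3 R) (q : 'rV[R]_3).

Lemma cover_radius_gt0 B : C B -> 0 < bradius B.
Proof. by case: cover => + _ _ _ _; apply. Qed.

Lemma cover_radius_ge1 B : C B -> 1 <= bradius B.
Proof.
move=> CB; have rB_gt0 := cover_radius_gt0 CB.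
case: cover => _ _ /(_ B CB) + _ _; rewrite /bvol -[X in X <= _]mulr1.
by rewrite ler_pM2l ?mulr_gt0 ?pi_gt0 // expr_ge1 // ltW.
Qed.

Lemma cover_radius_le A B : C A -> C B -> intersect A B -> bradius A <= eta * bradius B.
Proof.
move=> CA CB AB; have [rA_gt0 rB_gt0] := (cover_radius_gt0 CA, cover_radius_gt0 CB).
have k_gt0 : 0 < powR (4 / 3 * pi) (1/3) :> R by rewrite powR_gt0 // mulr_gt0 ?pi_gt0.
case: cover => _ _ _ _ /(_ A B CA CB AB) /andP[_].
rewrite !powR_bvol ?(ltW rA_gt0) ?(ltW rB_gt0) //.
by rewrite invfM mulrACA mulfV ?gt_eqF // mul1r ler_pdivrMr // mulrC.
Qed.

Lemma near_balls_size_le q (s : seq (ball3 R)) : uniq s ->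
  (forall O, O \in s -> C O /\ near_ball q (1/4) O) -> (size s)%:R <= 8 * sigma.
Proof.
move=> s_uniq s_near.
have octant_count_le k : (count (fun O => octant q O == k) s)%:R <= sigma.
  rewrite -size_filter.
  case def_t: (seq.filter _ s) => [|O0 t]; first exact: ltW.
  have : O0 \in seq.filter (fun O => octant q O == k) s by rewrite def_t mem_head.
  rewrite mem_filter => /andP[/eqP oct0 /s_near[CO0 near0]].
  case: cover => _ _ _ /(_ O0 CO0 (O0 :: t)) + _; apply; first by rewrite -def_t filter_uniq.
  move=> O; rewrite -def_t mem_filter => /andP[/eqP octO /s_near[CO nearO]].
  split=> //; apply: (near_octant_intersect (q := q)); rewrite ?cover_radius_ge1 //.
  by rewrite oct0 octO.
rewrite (size_sum_count (octant q)) natr_sum.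
apply: le_trans (ler_sum _ (fun k _ => octant_count_le k)) _.
by rewrite sumr_const card_ffun card_bool card_ord mulr_natl.
Qed.

Lemma near_balls_finite q :
  exists s : seq (ball3 R), forall O, C O -> near_ball q (1/4) O -> O \in s.
Proof.
have bound_gt := archi_boundP (ltW (mulr_gt0 (ltr0n R 8) sigma_gt0)).
case: (@uniq_size_bounded_enum _ (fun O => C O /\ near_ball q (1/4) O)
  (Num.bound (8 * sigma))) => [s s_uniq s_near|s near_in_s].
  apply: ltnW; rewrite -(ltr_nat R).
  exact: le_lt_trans (near_balls_size_le s_uniq s_near) bound_gt.
by exists s => O CO nearO; apply: near_in_s.
Qed.

Lemma cover_locally_finite q :
  exists2 e, 0 < e & forall O, C O -> near_ball q e O -> cball O q.
Proof.
have [s near_in_s] := near_balls_finite q.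
have quarter_gt0 : 0 < 1/4 :> R by rewrite divr_gt0.
have [e /andP[e_gt0 e_le] gap] := finite_balls_gap q s quarter_gt0.
by exists e => // O CO nearO; apply: gap (near_in_s O CO (near_ballW e_le nearO)) nearO.
Qed.

Definition chain3 X Y := exists A1 A2,
  [/\ C A1, C A2, intersect X A1, intersect A1 A2 & intersect A2 Y].

Lemma chain3_sym X Y : chain3 X Y -> chain3 Y X.
Proof.
by case=> A1 [A2 [CA1 CA2 XA1 A12 A2Y]]; exists A2, A1; split=> //; apply: intersect_sym.
Qed.

Lemma chain3_layer3 X Y : C Y -> chain3 X Y -> cball Y `<=` layer C X 3.
Proof.
move=> CY [A1 [A2 [CA1 CA2 [z [Xz A1z]] [z' [A1z' A2z']] [z'' [A2z'' Yz'']]]]] y Yy.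
exists Y => //; split=> //; exists z''; split=> //.
exists A2 => //; split=> //; exists z'; split=> //.
by exists A1 => //; split=> //; exists z.
Qed.

Lemma cover_segment_locally_finite (a b : 'rV[R]_3) s : exists2 delta, 0 < delta &
  forall t B, C B -> `|t - s| <= delta -> cball B (segpt a b t) -> cball B (segpt a b s).
Proof.
have [e e_gt0 near_in] := cover_locally_finite (segpt a b s).
have D_ge0 : 0 <= enorm (b - a) by apply: enorm_ge0.
exists (e / (enorm (b - a) + 1)) => [|t B CB t_close Bt]; first by rewrite divr_gt0 ?ltr_wpDl.
apply: near_in => //; rewrite /near_ball.
apply: le_lt_trans (enorm_distD _ (segpt a b t) _) _.
rewrite addrC enorm_segpt_dist distrC ler_ltD //.
apply: le_lt_trans (ler_wpM2r D_ge0 t_close) _.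
by rewrite mulrAC ltr_pdivrMr ?ltr_wpDl // ltr_pM2l // ltrDl.
Qed.

Lemma cover_segment_exit (F : set (ball3 R)) (a b : 'rV[R]_3) :
  F `<=` C -> (exists2 A, F A & cball A a) ->
  (exists2 A, F A & cball A b) \/
  exists A B, [/\ F A, C B, ~ F B & intersect A B] /\
              exists2 t, 0 <= t <= 1 & cball B (segpt a b t).
Proof.
move=> FC [A0 FA0 A0a].
pose K := [set t : R | 0 <= t <= 1 /\ exists2 A, F A & cball A (segpt a b t)].
have K0 : K 0 by split; [rewrite lexx ler01 | exists A0 => //; rewrite segpt0].
have K_sup : has_sup K by split; [exists 0 | exists 1 => t [/andP[]]].
have s_ge0 : 0 <= sup K by apply: sup_upper_bound.
have s_le1 : sup K <= 1 by apply: ge_sup; [exists 0 | move=> t [/andP[]]].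
have [delta delta_gt0 close] := cover_segment_locally_finite a b (sup K).
have [t1 Kt1 t1_gt] := sup_adherent delta_gt0 K_sup.
have t1_le := sup_upper_bound K_sup Kt1.
case: Kt1 => _ [A1 FA1 A1t1].
have A1_s : cball A1 (segpt a b (sup K)).
  by apply: close (FC _ FA1) _ A1t1; rewrite ler_distlC; lra.
have [s_lt1|s_ge1] := ltP (sup K) 1; last first.
  have s_eq1 : sup K = 1 by apply/eqP; rewrite eq_le s_le1 s_ge1.
  by left; exists A1; rewrite // -(segpt1 a b) -s_eq1.
set m := Order.min delta (1 - sup K).
have m_gt0 : 0 < m by rewrite lt_min delta_gt0 subr_gt0.
have [m_le_delta m_le_gap] : m <= delta /\ m <= 1 - sup K by rewrite !ge_min !lexx orbT.
have [B CB Bm] : exists2 B, C B & cball B (segpt a b (sup K + m)).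
  by case: cover => _ + _ _ _; apply.
have B_s : cball B (segpt a b (sup K)).
  by apply: close CB _ Bm; rewrite [sup K + m]addrC addrK ger0_norm // ltW.
right; exists A1, B; split; last by exists (sup K + m) => //; apply/andP; split; lra.
split=> // [FB|]; last by exists (segpt a b (sup K)).
have /(sup_upper_bound K_sup) : K (sup K + m).
  by split; [apply/andP; split; lra | exists B].
lra.
Qed.

Lemma center_dist_gt_of_no_chain3 X Y : C X -> C Y -> bradius Y <= bradius X ->
  ~ chain3 X Y ->
  (1 + 2 / eta ^+ 2) * (bradius X + bradius Y) ^+ 2 < enorm (bcenter X - bcenter Y) ^+ 2.
Proof.
move=> CX CY rY_le no_chain.
have [rX_gt0 rY_gt0] := (cover_radius_gt0 CX, cover_radius_gt0 CY).
case: (@cover_segment_exit [set A | C A /\ intersect X A] (bcenter X) (bcenter Y)).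
- by move=> A [].
- exists X; last exact/cball_center/ltW.
  by split=> //; exists (bcenter X); split; apply/cball_center/ltW.
- case=> A [CA XA] A_cY; case: no_chain; exists X, A; split=> //.
    by exists (bcenter X); split; apply/cball_center/ltW.
  by exists (bcenter Y); split=> //; apply/cball_center/ltW.
case=> A [B [[[CA XA] CB FB AB] [t t01 Bt]]].
have BX : ~ intersect B X by move/intersect_sym => XB; apply: FB.
have BY : ~ intersect B Y by move=> BY; apply: no_chain; exists A, B.
have rB_ge : (eta ^+ 2)^-1 * bradius X <= bradius B.
  rewrite mulrC ler_pdivrMr ?exprn_gt0 // mulrC expr2 -mulrA.
  apply: le_trans (cover_radius_le CX CA XA) _.
  by rewrite ler_pM2l // cover_radius_le.
apply: (center_dist_gt_of_crossing_ball t01 _ _ rB_ge Bt BX BY).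
- by rewrite rY_gt0 rY_le.
- by rewrite invr_ge0 exprn_ge0 // ltW.
Qed.

Lemma sum_radii_lt_of_no_chain3 X Y : C X -> C Y -> ~ chain3 X Y ->
  bradius X + bradius Y < beta eta * enorm (bcenter X - bcenter Y).
Proof.
wlog rY_le : X Y / bradius Y <= bradius X => [wlog_rY|].
  move=> CX CY no_chain; have [|rX_lt] := leP (bradius Y) (bradius X).
    by move/wlog_rY; apply.
  rewrite addrC enorm_distC; apply: wlog_rY (ltW rX_lt) CY CX _.
  by move/chain3_sym.
move=> CX CY /(center_dist_gt_of_no_chain3 CX CY rY_le) sq_lt.
have r_gt0 : 0 < bradius X + bradius Y by rewrite addr_gt0 ?cover_radius_gt0.
have u_gt0 : 0 < 1 + 2 / eta ^+ 2 by rewrite ltr_wpDr ?divr_ge0 ?sqr_ge0.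
rewrite betaE mulrC ltr_pdivlMr ?sqrtr_gt0 //.
rewrite -(@ltr_pXn2r _ 2) ?nnegrE ?enorm_ge0 ?mulr_ge0 ?sqrtr_ge0 ?(ltW r_gt0) //.
by rewrite exprMn sqr_sqrtr ?(ltW u_gt0) // mulrC.
Qed.

End Cover.

Theorem lemma3p4 (R : realType) (sigma eta : R) (C : set (ball3 R))
  (hsigma : 0 < sigma) (heta : 0 < eta) (hC : is_cover sigma eta C)
  (B B' : ball3 R) (hB : C B) (hB' : C B')
  (hnot : ~ (cball B' `<=` layer C B 3)) :
  (0 < beta eta < 1) /\
  (forall x y : 'rV[R]_3, cball B x -> cball B' y ->
     (1 - beta eta) * enorm (bcenter B - bcenter B') <= enorm (x - y) /\
     enorm (x - y) <= 2 * enorm (bcenter B - bcenter B')).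
Proof.
have beta_bounds := beta_gt0_lt1 heta.
split=> // x y Bx B'y.
apply: enorm_dist_bounds Bx B'y; first by case/andP: beta_bounds => _ /ltW.
apply/ltW/(sum_radii_lt_of_no_chain3 hsigma heta hC hB hB').
by move/(chain3_layer3 hB').
Qed.
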